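(* Fix one of the two variants $\sharp\in\{\text{lumped},\text{exact}\}$ described in the context. Let $\vec X^m\in\underline V^h_{\partial_0}$ satisfy assumption $(\mathfrak A)$ and assumption $(\mathfrak C)_\sharp$, and let $\Delta t_m>0$. Then there exists a unique pair $(\delta\vec X^{m+1},\kappa^{m+1})\in\underline V^h_\partial\times W_\sharp$ such that, with $\vec X^{m+1}=\vec X^m+\delta\vec X^{m+1}$, $$\Big(\vec X^m\cdot\vec e_1\,\tfrac{\vec X^{m+1}-\vec X^m}{\Delta t_m},\chi\,\vec\nu^m|\vec X^m_\rho|\Big)_\sharp=\Big(\vec X^m\cdot\vec e_1\,\kappa^{m+1},\chi\,|\vec X^m_\rho|\Big)_\sharp\quad\forall\,\chi\in W_\sharp,$$ $$\Big(\vec X^m\cdot\vec e_1\,\kappa^{m+1}\vec\nu^m,\vec\eta\,|\vec X^m_\rho|\Big)_\sharp+\big(\vec\eta\cdot\vec e_1,|\vec X^m_\rho|\big)+\Big((\vec X^m\cdot\vec e_1)\vec X^{m+1}_\rho,\vec\eta_\rho|\vec X^m_\rho|^{-1}\Big)=-\sum_{i=1}^2\sum_{p\in\partial_iI}\widehat\varrho^{(p)}(\vec X^m(p)\cdot\vec e_1)\,\vec\eta(p)\cdot\vec e_{3-i}\quad\forall\,\vec\eta\in\underline V^h_\partial .$$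
   Context: Setup. $\vec e_1=(1,0)^T$, $\vec e_2=(0,1)^T$; ''$\cdot$'' is the Euclidean inner product. $I$ is either the periodic interval $\mathbb R/\mathbb Z$ (with $\partial I=\emptyset$) or $I=(0,1)$ (with $\partial I=\{0,1\}$). $\partial I=\partial_DI\cup\partial_0I\cup\partial_1I\cup\partial_2I$ is a given disjoint partition, and $\widehat\varrho^{(p)}\in\mathbb R$, $p\in\{0,1\}$, are given constants with $|\widehat\varrho^{(p)}|\le1$. Let $J\ge3$, $h=1/J$, $q_j=jh$ ($j=0,\dots,J$; $q_0=q_J$ identified in the periodic case). $V^h$ is the space of continuous functions on $\overline I$ (periodic if $I=\mathbb R/\mathbb Z$) that are affine on each $[q_{j-1},q_j]$; $\underline V^h=[V^h]^2$; $\underline V^h_{\partial_0}=\{\vec\eta\in\underline V^h:\vec\eta(\rho)\cdot\vec e_1=0\ \forall\rho\in\partial_0I\}$; $\underline V^h_\partial=\{\vec\eta\in\underline V^h_{\partial_0}:\vec\eta(\rho)\cdot\vec e_i=0\ \forall\rho\in\partial_iI,\ i=1,2;\ \vec\eta(\rho)=\vec0\ \forall\rho\in\partial_DI\}$; $W^h_{\partial_0}=\{\chi\in V^h:\chi(\rho)=0\ \forall\rho\in\partial_0I\}$. $(\cdot,\cdot)$ is the $L^2(I)$ inner product (with dot product for vector functions), and for piecewise continuous $f,g$ the mass-lumped product is $(f,g)^h=\tfrac h2\sum_{j=1}^J[(fg)(q_j^-)+(fg)(q_{j-1}^+)]$. Two variants: in the ''lumped'' variant $(\cdot,\cdot)_\sharp=(\cdot,\cdot)^h$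 and $W_\sharp=W^h_{\partial_0}$; in the ''exact'' variant $(\cdot,\cdot)_\sharp=(\cdot,\cdot)$ and $W_\sharp=V^h$. For $\vec X^m\in\underline V^h_{\partial_0}$ with $|\vec X^m_\rho|>0$ a.e., set $\vec\nu^m=-[\vec X^m_\rho]^\perp/|\vec X^m_\rho|$, where $(a,b)^\perp=(b,-a)$. Assumption $(\mathfrak A)$: $|\vec X^m_\rho|>0$ a.e. on $I$ and $\vec X^m(\rho)\cdot\vec e_1>0$ for all $\rho\in\overline I\setminus\partial_0I$. Assumption $(\mathfrak C)_\sharp$: the set $\{((\vec X^m\cdot\vec e_1)\vec\nu^m,\chi|\vec X^m_\rho|)_\sharp:\chi\in W_\sharp\}\subset\mathbb R^2$ spans $\mathbb R^2$. *)

(* Real numbers are modelled by an arbitrary real closed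
   field R : rcfType (all quantities are algebraic: products, sums, square
   roots, and integrals of piecewise polynomials on a uniform mesh). *)
From HB Require Import structures.
From mathcomp Require Import all_boot all_order all_algebra.
Set Implicit Arguments. Unset Strict Implicit. Unset Printing Implicit Defensive.
Import Order.TTheory GRing.Theory Num.Theory.
Local Open Scope ring_scope.

(* I = R/Z (periodic) or I = (0,1) *)
Inductive domain := Periodic | Interval.
(* which part of the partition of dI a boundary point belongs to *)
Inductive bctype := BD | B0 | B1 | B2.
(* lumped (mass lumping, W = W^h_{d0}) or exact (L2 product, W = V^h) *)
Inductive variant := Lumped | Exact.

Definition bctype_eqb (a b : bctype) : bool :=
  match a, b with
  | BD, BD | B0, B0 | B1, B1 | B2, B2 => true | _, _ => false end.

Section FE.
Variable R : rcfType.
Variable J : nat.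
(* A (scalar) function of V^h is given by its nodal values at q_j = j/J,
   j = 0..J (in the periodic case q_0 and q_J are identified). *)
Definition nodal := 'I_J.+1 -> R.

Definition ep (p : bool) : 'I_J.+1 := if p then ord_max else ord0.

Definition inbd (dom : domain) (bc : bool -> bctype) (i : bctype) (p : bool) : bool :=
  match dom with Periodic => false | Interval => bctype_eqb (bc p) i end.

Definition inV (dom : domain) (f : nodal) : Prop :=
  dom = Periodic -> f ord0 = f ord_max.

Definition inVd0 dom bc (f1 f2 : nodal) : Prop :=
  inV dom f1 /\ inV dom f2 /\ (forall p, inbd dom bc B0 p -> f1 (ep p) = 0).

Definition inVd dom bc (f1 f2 : nodal) : Prop :=
  inVd0 dom bc f1 f2 /\
  (forall p, inbd dom bc B1 p -> f1 (ep p) = 0) /\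
  (forall p, inbd dom bc B2 p -> f2 (ep p) = 0) /\
  (forall p, inbd dom bc BD p -> f1 (ep p) = 0 /\ f2 (ep p) = 0).

Definition inWd0 dom bc (f : nodal) : Prop :=
  inV dom f /\ (forall p, inbd dom bc B0 p -> f (ep p) = 0).

Definition inW (v : variant) dom bc (f : nodal) : Prop :=
  match v with Lumped => inWd0 dom bc f | Exact => inV dom f end.

Definition nd (f : nodal) (j : nat) : R := f (inord j).

(* restriction of f to the element [q_k, q_{k+1}] (k < J), as a polynomial in
   the local coordinate s in [0,1], rho = q_k + s h *)
Definition loc (f : nodal) (k : nat) : {poly R} :=
  (nd f k)%:P + (nd f k.+1 - nd f k) *: 'X.

Definition der (f : nodal) (k : nat) : R := (nd f k.+1 - nd f k) * J%:R.

Definition nrm (X1 X2 : nodal) (k : nat) : R :=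
  Num.sqrt (der X1 k ^+ 2 + der X2 k ^+ 2).

(* nu = - [X_rho]^perp / |X_rho|, (a,b)^perp = (b,-a) *)
Definition nu1 (X1 X2 : nodal) (k : nat) : R := - der X2 k / nrm X1 X2 k.
Definition nu2 (X1 X2 : nodal) (k : nat) : R := der X1 k / nrm X1 X2 k.

Definition int01 (p : {poly R}) : R := \sum_(i < size p) p`_i / (i.+1)%:R.

(* exact L2 product: given the restrictions P k of the (piecewise polynomial)
   integrand f.g to the elements, (f,g) = sum_k h * int_0^1 P k *)
Definition ipE (P : nat -> {poly R}) : R :=
  \sum_(k < J) (J%:R)^-1 * int01 (P k).

(* mass-lumped product: (f,g)^h = h/2 sum_k [(fg)(q_{k+1}^-) + (fg)(q_k^+)] *)
Definition ipL (P : nat -> {poly R}) : R :=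
  \sum_(k < J) (J%:R)^-1 / 2%:R * ((P k).[1] + (P k).[0]).

Definition ipS (v : variant) (P : nat -> {poly R}) : R :=
  match v with Lumped => ipL P | Exact => ipE P end.

Definition assumA dom bc (X1 X2 : nodal) : Prop :=
  (forall k, (k < J)%N -> 0 < nrm X1 X2 k) /\
  (forall k s, (k < J)%N -> 0 <= s <= 1 ->
     ~ ((k = 0%N /\ s = 0 /\ inbd dom bc B0 false) \/
        (k = J.-1 /\ s = 1 /\ inbd dom bc B0 true)) ->
     0 < (loc X1 k).[s]).

Definition cvec (v : variant) (X1 X2 chi : nodal) : R * R :=
  (ipS v (fun k => loc X1 k * (nu1 X1 X2 k)%:P * loc chi k * (nrm X1 X2 k)%:P),
   ipS v (fun k => loc X1 k * (nu2 X1 X2 k)%:P * loc chi k * (nrm X1 X2 k)%:P)).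

Definition assumC v dom bc (X1 X2 : nodal) : Prop :=
  forall a b : R, exists (n : nat) (c : 'I_n -> R) (chis : 'I_n -> nodal),
    (forall i, inW v dom bc (chis i)) /\
    a = \sum_(i < n) c i * (cvec v X1 X2 (chis i)).1 /\
    b = \sum_(i < n) c i * (cvec v X1 X2 (chis i)).2.

Definition scheme v dom bc (rh : bool -> R) (dt : R)
  (X1 X2 dX1 dX2 kap : nodal) : Prop :=
  let Xn1 : nodal := fun i => X1 i + dX1 i in
  let Xn2 : nodal := fun i => X2 i + dX2 i in
  (forall chi, inW v dom bc chi ->
     ipS v (fun k => loc X1 k *
              ((loc Xn1 k - loc X1 k) * (dt^-1 * nu1 X1 X2 k)%:P
             + (loc Xn2 k - loc X2 k) * (dt^-1 * nu2 X1 X2 k)%:P)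
              * loc chi k * (nrm X1 X2 k)%:P)
   = ipS v (fun k => loc X1 k * loc kap k * loc chi k * (nrm X1 X2 k)%:P)) /\
  (forall eta1 eta2, inVd dom bc eta1 eta2 ->
     ipS v (fun k => loc X1 k * loc kap k *
              ((nu1 X1 X2 k)%:P * loc eta1 k + (nu2 X1 X2 k)%:P * loc eta2 k)
              * (nrm X1 X2 k)%:P)
   + ipE (fun k => loc eta1 k * (nrm X1 X2 k)%:P)
   + ipE (fun k => loc X1 k *
              ((der Xn1 k * der eta1 k + der Xn2 k * der eta2 k)
                 / nrm X1 X2 k)%:P)
   = - \sum_(p : bool)
         ((if inbd dom bc B1 p then rh p * X1 (ep p) * eta2 (ep p) else 0)
        + (if inbd dom bc B2 p then rh p * X1 (ep p) * eta1 (ep p) else 0))).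

End FE.

(* For fixed X^m the scheme is a square linear system for (dX^{m+1}, kappa^{m+1}) on the
   finite-dimensional space V^h_\partial x W_sharp, so existence follows from uniqueness.
   For the homogeneous system, testing the first equation with chi = kappa and the second
   with eta = dX gives
     dt (X.e1 kappa, kappa |X_rho|)_sharp + ((X.e1) dX_rho, dX_rho |X_rho|^{-1}) = 0.
   By (A) both terms are nonnegative and vanish only if kappa = 0 and dX is a constant c
   (in the exact variant because a positive affine weight times the square of an affine
   function has positive integral; in the lumped variant because X.e1 > 0 at every node
   outside \partial_0 I, where kappa vanishes).  The first equation then says that c is
   orthogonal to every vector ((X.e1) nu, chi |X_rho|)_sharp, hence c = 0 by (C). *)

From HB Require Import structures.
From mathcomp Require Import all_boot all_order all_algebra.
From mathcomp Require Import ring lra.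
From Stdlib Require Import FunctionalExtensionality.
Import Order.TTheory GRing.Theory Num.Theory.
Local Open Scope ring_scope.
Set Implicit Arguments. Unset Strict Implicit.

Section FiniteDimensionalSolvability.
Variables (F : fieldType) (n m : nat).

Lemma linear_row_sum {V : lmodType F} {f : 'rV[F]_n -> V} {I : finType}
    {c : I -> F} {e : I -> 'rV_n} :
  (forall a x y, f (a *: x + y) = a *: f x + f y) ->
  f (\sum_i c i *: e i) = \sum_i c i *: f (e i).
Proof.
move=> f_lin; have f0 : f 0 = 0.
  apply: (@addrI _ (f 0)); rewrite addr0 [RHS](_ : f 0 = f (1 *: 0 + 0)).
    by rewrite f_lin scale1r.
  by rewrite scale1r addr0.
apply: (big_ind2 (fun x y => f x = y)) => // [x1 x2 y1 y2 <- <-|i _].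
  by rewrite -{1}(scale1r x1) f_lin scale1r.
by rewrite -[c i *: e i]addr0 f_lin f0 addr0.
Qed.

Variables (B : 'rV[F]_n -> 'rV[F]_n -> F) (L : 'rV[F]_n -> F) (G : 'rV[F]_n -> 'rV[F]_m).
Hypotheses (B_linl : forall a x y w, B (a *: x + y) w = a * B x w + B y w)
  (B_linr : forall a x w z, B x (a *: w + z) = a * B x w + B x z)
  (L_lin : forall a w z, L (a *: w + z) = a * L w + L z)
  (G_lin : forall a x y, G (a *: x + y) = a *: G x + G y)
  (B_nondegenerate : forall u, G u = 0 -> (forall w, G w = 0 -> B u w = 0) -> u = 0).

Lemma solution_unique u u' :
  G u = 0 -> (forall w, G w = 0 -> B u w = L w) ->
  G u' = 0 -> (forall w, G w = 0 -> B u' w = L w) -> u = u'.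
Proof.
move=> Gu Bu Gu' Bu'; apply/eqP; rewrite -subr_eq0; apply/eqP.
have diffE x : x - u' = (-1) *: u' + x by rewrite scaleN1r addrC.
apply: B_nondegenerate => [|w Gw]; rewrite diffE.
  by rewrite G_lin Gu Gu' scaler0 addr0.
by rewrite B_linl Bu // Bu' // mulN1r addNr.
Qed.

Lemma solution_exists : exists2 u, G u = 0 & forall w, G w = 0 -> B u w = L w.
Proof.
pose Gm : 'M_(n, m) := \matrix_(i, j) G (delta_mx 0 i) 0 j.
have GE x : G x = x *m Gm.
  rewrite mulmx_sum_row {1}(row_sum_delta x) (linear_row_sum G_lin).
  by apply: eq_bigr => i _; congr (_ *: _); apply/rowP => j; rewrite !mxE.
pose E := row_base (kermx Gm).
have GE0 y : G (y *m E) = 0.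
  by rewrite GE; apply/sub_kermxP; rewrite (submx_trans (submxMl _ _)) ?eq_row_base.
have kerGE w : G w = 0 -> exists z, w = z *m E.
  by rewrite GE => /sub_kermxP; rewrite -(eq_row_base (kermx Gm)) => /submxP [z ->]; exists z.
pose A : 'M_(\rank (kermx Gm)) := \matrix_(i, j) B (row i E) (row j E).
have BlE y j : B (y *m E) (row j E) = (y *m A) 0 j.
  rewrite mulmx_sum_row (linear_row_sum (f := fun x => B x (row j E) : F^o)) ?mxE.
    by apply: eq_bigr => i _; rewrite mxE.
  by move=> a x z; rewrite B_linl.
have BrE x z : B x (z *m E) = \sum_j z 0 j * B x (row j E).
  by rewrite mulmx_sum_row (linear_row_sum (f := B x : _ -> F^o)).
have A_unit : A \in unitmx.
  rewrite -row_free_unit; apply/inj_row_free => y yA0.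
  have : y *m E = 0.
    apply: B_nondegenerate => // w /kerGE [z ->]; rewrite BrE big1 // => j _.
    by rewrite BlE yA0 mxE mulr0.
  by move/eqP; rewrite mulmx_free_eq0 ?row_base_free // => /eqP.
pose l : 'rV_(\rank (kermx Gm)) := \row_j L (row j E).
exists ((l *m invmx A) *m E) => // w /kerGE [z ->].
rewrite BrE [X in L X]mulmx_sum_row (linear_row_sum (f := L : _ -> F^o)) //.
by apply: eq_bigr => j _; rewrite BlE mulmxKV // mxE.
Qed.

End FiniteDimensionalSolvability.

Section PiecewiseLinear.
Variables (R : rcfType) (J : nat).
Implicit Types (f g h : nodal R J) (p q : {poly R}) (P Q S : nat -> {poly R}).

Lemma nd_ord f (i : 'I_J.+1) : nd f i = f i.
Proof. by rewrite /nd inord_val. Qed.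

Lemma nodal_eq0 f : (forall j, (j <= J)%N -> nd f j = 0) -> forall i, f i = 0.
Proof. by move=> f0 i; rewrite -nd_ord f0 // -ltnS. Qed.

Lemma loc_lincomb {a f g h} k : (forall i, h i = a * f i + g i) ->
  loc h k = a%:P * loc f k + loc g k.
Proof.
by move=> hE; rewrite /loc /nd !hE -!mul_polyC !(rmorphD, rmorphB, rmorphM) /=; ring.
Qed.

Lemma der_lincomb {a f g h} k : (forall i, h i = a * f i + g i) ->
  der h k = a * der f k + der g k.
Proof. by move=> hE; rewrite /der /nd !hE; ring. Qed.

Lemma loc_cst {f c} k : (forall i, f i = c) -> loc f k = c%:P.
Proof. by move=> fE; rewrite /loc /nd !fE subrr scale0r addr0. Qed.

Lemma loc_fun0 k : loc ((fun=> 0) : nodal R J) k = 0.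
Proof. by rewrite (loc_cst k (c := 0)) // polyC0. Qed.

Lemma der_fun0 k : der ((fun=> 0) : nodal R J) k = 0.
Proof. by rewrite /der subrr mul0r. Qed.

Lemma der_eq0_cst {f} : (forall k, (k < J)%N -> der f k = 0) -> forall i, f i = f ord0.
Proof.
move=> der0 i; rewrite -[i]inord_val -[ord0]inord_val.
elim: (val i) (ltn_ord i) => [//|j IHj] ltjJ; rewrite -{}IHj 1?ltnW //.
have /eqP := der0 j ltjJ.
rewrite /der /nd mulf_eq0 pnatr_eq0 (gtn_eqF (leq_ltn_trans (leq0n j) ltjJ)) orbF.
by rewrite subr_eq0 => /eqP.
Qed.

Lemma horner_loc f k : (loc f k).[0] = nd f k /\ (loc f k).[1] = nd f k.+1.
Proof. by rewrite !(hornerD, hornerC, hornerZ, hornerX) mulr0 addr0 mulr1 addrC subrK. Qed.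

Lemma int01_widen {n p} : (size p <= n)%N -> int01 p = \sum_(i < n) p`_i / i.+1%:R.
Proof.
move=> le_p_n; rewrite /int01 (big_ord_widen n (fun i => p`_i / i.+1%:R) le_p_n).
rewrite big_mkcond /=; apply: eq_bigr => i _; case: ifP => // /negbT.
by rewrite -leqNgt => lei; rewrite nth_default // mul0r.
Qed.

Lemma int01_lincomb a p q : int01 (a%:P * p + q) = a * int01 p + int01 q.
Proof.
set n := maxn (size p) (size q).
have sp : (size p <= n)%N by rewrite leq_maxl.
have sq : (size q <= n)%N by rewrite leq_maxr.
have sr : (size (a%:P * p + q)%R <= n)%N.
  rewrite (leq_trans (size_polyD _ _)) // geq_max sq andbT mul_polyC.
  exact: leq_trans (size_scale_leq _ _) sp.
rewrite !(int01_widen sp, int01_widen sq, int01_widen sr) mulr_sumr -big_split /=.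
by apply: eq_bigr => i _; rewrite coefD coefCM mulrA mulrDl.
Qed.

Lemma int01_0 : int01 (0 : {poly R}) = 0.
Proof. by rewrite /int01 size_poly0 big_ord0. Qed.

Lemma int01_Xn i : int01 ('X^i : {poly R}) = i.+1%:R^-1 :> R.
Proof.
rewrite /int01 size_polyXn big_ord_recr /= big1 ?add0r; first by rewrite coefXn eqxx mul1r.
by move=> j _; rewrite coefXn (ltn_eqF (ltn_ord j)) mul0r.
Qed.

Lemma int01_cubic (c0 c1 c2 c3 : R) :
  int01 (c0%:P + c1%:P * 'X + c2%:P * 'X^2 + c3%:P * 'X^3) =
  c0 + c1 / 2%:R + c2 / 3%:R + c3 / 4%:R.
Proof.
have -> : c0%:P + c1%:P * 'X + c2%:P * 'X^2 + c3%:P * 'X^3 = c0%:P * 'X^0 +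
    (c1%:P * 'X^1 + (c2%:P * 'X^2 + (c3%:P * 'X^3 + 0))) :> {poly R}.
  by rewrite expr0 expr1; ring.
by rewrite !int01_lincomb !int01_Xn int01_0 invr1; ring.
Qed.

(* The right-hand side is a nonnegative combination of squares as soon as a, a + b >= 0. *)
Lemma int01_lin_sq_cst (a b c e z : R) :
  int01 ((a%:P + b *: 'X) * (c%:P + e *: 'X) * (c%:P + e *: 'X) * z%:P) =
  z * (a * (2%:R * c ^+ 2 + (2%:R * c + e) ^+ 2) / 12%:R
       + (a + b) * (2%:R * c ^+ 2 + (3%:R * e + 4%:R * c) ^+ 2) / 36%:R).
Proof.
have -> : (a%:P + b *: 'X) * (c%:P + e *: 'X) * (c%:P + e *: 'X) * z%:P =
    (z * (a * c ^+ 2))%:P + (z * (b * c ^+ 2 + 2%:R * a * c * e))%:P * 'X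
    + (z * (a * e ^+ 2 + 2%:R * b * c * e))%:P * 'X^2 + (z * (b * e ^+ 2))%:P * 'X^3.
  by rewrite -!mul_polyC !(rmorphD, rmorphM, rmorphXn, rmorph_nat) /=; ring.
by rewrite int01_cubic; field; rewrite ?pnatr_eq0.
Qed.

Lemma int01_lin_cst (a b z : R) : int01 ((a%:P + b *: 'X) * z%:P) = z * (a + b / 2%:R).
Proof.
have -> : (a%:P + b *: 'X) * z%:P = (z * a)%:P + (z * b)%:P * 'X + 0%:P * 'X^2 + 0%:P * 'X^3.
  by rewrite -!mul_polyC !(rmorphD, rmorphM) /= !rmorph0; ring.
by rewrite int01_cubic; ring.
Qed.

Definition ip_elem v P k : R :=
  if v is Lumped then (J%:R)^-1 / 2%:R * ((P k).[1] + (P k).[0])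
  else (J%:R)^-1 * int01 (P k).

Lemma ipS_sum v P : ipS J v P = \sum_(k < J) ip_elem v P k.
Proof. by case: v. Qed.

Lemma ipS_lincomb v a P Q S : (forall k, S k = a%:P * P k + Q k) ->
  ipS J v S = a * ipS J v P + ipS J v Q.
Proof.
move=> SE; rewrite !ipS_sum mulr_sumr -big_split /=; apply: eq_bigr => k _.
rewrite /ip_elem SE; case: v; last by rewrite int01_lincomb; ring.
by rewrite !(hornerD, hornerCM); ring.
Qed.

Lemma ipS_eq0 v P : (forall k, P k = 0) -> ipS J v P = 0.
Proof.
move=> P0; rewrite ipS_sum big1 // => k _.
by rewrite /ip_elem P0; case: v; rewrite ?horner0 ?int01_0; ring.
Qed.

Lemma ipS_scale v a P S : (forall k, S k = a%:P * P k) -> ipS J v S = a * ipS J v P.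
Proof.
move=> SE; rewrite (@ipS_lincomb v a P (fun=> 0)) ?(@ipS_eq0 v (fun=> 0)) ?addr0 //.
by move=> k; rewrite SE addr0.
Qed.

Lemma ipS_ge0 {v P} : (forall k, (k < J)%N -> 0 <= ip_elem v P k) -> 0 <= ipS J v P.
Proof. by move=> P_ge0; rewrite ipS_sum sumr_ge0 // => k _; apply: P_ge0. Qed.

Lemma ipS_eq0_elem {v P} : (forall k, (k < J)%N -> 0 <= ip_elem v P k) ->
  ipS J v P = 0 -> forall k, (k < J)%N -> ip_elem v P k = 0.
Proof.
move=> P_ge0; rewrite ipS_sum => /(psumr_eq0P (fun (k : 'I_J) _ => P_ge0 k (ltn_ord k))) P0 k ltkJ.
exact: (P0 (Ordinal ltkJ)).
Qed.

End PiecewiseLinear.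

Section SchemeForms.
Variables (R : rcfType) (J : nat) (v : variant) (X1 X2 : nodal R J).
Implicit Types (ka ch : nodal R J).

Definition mass_density ka ch k : {poly R} :=
  loc X1 k * loc ka k * loc ch k * (nrm X1 X2 k)%:P.

Definition mass ka ch : R := ipS J v (mass_density ka ch).

Definition coupling ka (e1 e2 : nodal R J) : R :=
  ipS J v (fun k => loc X1 k * loc ka k *
    ((nu1 X1 X2 k)%:P * loc e1 k + (nu2 X1 X2 k)%:P * loc e2 k) * (nrm X1 X2 k)%:P).

Definition stiffness_density (d1 d2 e1 e2 : nodal R J) k : {poly R} :=
  loc X1 k * ((der d1 k * der e1 k + der d2 k * der e2 k) / nrm X1 X2 k)%:P.

Definition stiffness (d1 d2 e1 e2 : nodal R J) : R :=
  ipS J Exact (stiffness_density d1 d2 e1 e2).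

Definition boundary_term dom bc (rh : bool -> R) (e1 e2 : nodal R J) : R := \sum_(p : bool)
  ((if inbd dom bc B1 p then rh p * X1 (ep J p) * e2 (ep J p) else 0)
 + (if inbd dom bc B2 p then rh p * X1 (ep J p) * e1 (ep J p) else 0)).

Definition scheme_rhs dom bc rh (e1 e2 : nodal R J) : R := - boundary_term dom bc rh e1 e2
  - ipS J Exact (fun k => loc e1 k * (nrm X1 X2 k)%:P) - stiffness X1 X2 e1 e2.

(* Both equations of the scheme, tested with (eta, chi) at once. *)
Definition scheme_form (dt : R) (d1 d2 ka e1 e2 ch : nodal R J) : R :=
  dt^-1 * coupling ch d1 d2 - mass ka ch + (coupling ka e1 e2 + stiffness d1 d2 e1 e2).

Section Linearity.
Variables (a : R) (f1 f2 g1 g2 h1 h2 : nodal R J).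
Hypotheses (h1E : forall i, h1 i = a * f1 i + g1 i) (h2E : forall i, h2 i = a * f2 i + g2 i).

Lemma mass_linl ch : mass h1 ch = a * mass f1 ch + mass g1 ch.
Proof. by apply: ipS_lincomb => k; rewrite /mass_density (loc_lincomb k h1E); ring. Qed.

Lemma mass_linr ka : mass ka h1 = a * mass ka f1 + mass ka g1.
Proof. by apply: ipS_lincomb => k; rewrite /mass_density (loc_lincomb k h1E); ring. Qed.

Lemma coupling_linl e1 e2 : coupling h1 e1 e2 = a * coupling f1 e1 e2 + coupling g1 e1 e2.
Proof. by apply: ipS_lincomb => k; rewrite (loc_lincomb k h1E); ring. Qed.

Lemma coupling_linr ka : coupling ka h1 h2 = a * coupling ka f1 f2 + coupling ka g1 g2.
Proof.
by apply: ipS_lincomb => k; rewrite (loc_lincomb k h1E) (loc_lincomb k h2E); ring.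
Qed.

Lemma stiffness_linl e1 e2 :
  stiffness h1 h2 e1 e2 = a * stiffness f1 f2 e1 e2 + stiffness g1 g2 e1 e2.
Proof.
apply: ipS_lincomb => k; rewrite /stiffness_density (der_lincomb k h1E) (der_lincomb k h2E).
by rewrite !(rmorphD, rmorphM) /=; ring.
Qed.

Lemma stiffness_linr d1 d2 :
  stiffness d1 d2 h1 h2 = a * stiffness d1 d2 f1 f2 + stiffness d1 d2 g1 g2.
Proof.
apply: ipS_lincomb => k; rewrite /stiffness_density (der_lincomb k h1E) (der_lincomb k h2E).
by rewrite !(rmorphD, rmorphM) /=; ring.
Qed.

Lemma scheme_rhs_lin dom bc rh :
  scheme_rhs dom bc rh h1 h2 = a * scheme_rhs dom bc rh f1 f2 + scheme_rhs dom bc rh g1 g2.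
Proof.
have bE : boundary_term dom bc rh h1 h2 =
    a * boundary_term dom bc rh f1 f2 + boundary_term dom bc rh g1 g2.
  rewrite /boundary_term mulr_sumr -big_split; apply: eq_bigr => p _ /=.
  by rewrite h1E h2E; do 2!case: ifP => _; ring.
rewrite /scheme_rhs bE stiffness_linr (@ipS_lincomb _ _ _ a
  (fun k => loc f1 k * (nrm X1 X2 k)%:P) (fun k => loc g1 k * (nrm X1 X2 k)%:P)); first ring.
by move=> k; rewrite (loc_lincomb k h1E); ring.
Qed.

End Linearity.

Local Notation O := ((fun=> 0) : nodal R J).

Lemma scheme_form_eta0 dt d1 d2 ka ch :
  scheme_form dt d1 d2 ka O O ch = dt^-1 * coupling ch d1 d2 - mass ka ch.
Proof.
rewrite /scheme_form [coupling ka _ _]ipS_eq0 ?[stiffness _ _ _ _]ipS_eq0 ?addr0 // => k.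
  by rewrite /stiffness_density !der_fun0; ring.
by rewrite !loc_fun0; ring.
Qed.

Lemma scheme_form_chi0 dt d1 d2 ka e1 e2 :
  scheme_form dt d1 d2 ka e1 e2 O = coupling ka e1 e2 + stiffness d1 d2 e1 e2.
Proof.
rewrite /scheme_form [coupling O _ _]ipS_eq0 ?[mass _ O]ipS_eq0 ?mulr0 ?subrr ?add0r // => k;
  by rewrite /mass_density !loc_fun0; ring.
Qed.

Lemma scheme_rhs0 dom bc rh : scheme_rhs dom bc rh O O = 0.
Proof.
rewrite /scheme_rhs /stiffness /boundary_term big1 => [|p _]; last by do 2!case: ifP => _; ring.
rewrite !ipS_eq0 => [|k|k]; first ring.
  by rewrite /stiffness_density !der_fun0; ring.
by rewrite loc_fun0; ring.
Qed.

Lemma coupling_cst {ch d1 d2 c1 c2} : (forall i, d1 i = c1) -> (forall i, d2 i = c2) ->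
  coupling ch d1 d2 = c1 * (cvec v X1 X2 ch).1 + c2 * (cvec v X1 X2 ch).2.
Proof.
move=> d1E d2E; rewrite /cvec /= -(@ipS_scale _ _ _ c2 _ (fun k => c2%:P *
  (loc X1 k * (nu2 X1 X2 k)%:P * loc ch k * (nrm X1 X2 k)%:P))) //.
by apply: ipS_lincomb => k; rewrite (loc_cst k d1E) (loc_cst k d2E); ring.
Qed.

Lemma assumC_orthogonal_eq0 {dom bc c1 c2} : assumC v dom bc X1 X2 ->
  (forall ch, inW v dom bc ch -> c1 * (cvec v X1 X2 ch).1 + c2 * (cvec v X1 X2 ch).2 = 0) ->
  c1 = 0 /\ c2 = 0.
Proof.
move=> spanC orth; have [n [g [chs [chsW [c1E c2E]]]]] := spanC c1 c2.
have : c1 ^+ 2 + c2 ^+ 2 = 0.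
  rewrite expr2 {2}c1E expr2 {2}c2E !mulr_sumr -big_split big1 //= => i _.
  by rewrite mulrCA [c2 * _]mulrCA -mulrDr orth ?mulr0.
by move/eqP; rewrite paddr_eq0 ?sqr_ge0 // !sqrf_eq0 => /andP[/eqP -> /eqP ->].
Qed.

Lemma schemeE dom bc rh dt d1 d2 ka :
  scheme v dom bc rh dt X1 X2 d1 d2 ka <->
  (forall ch, inW v dom bc ch -> dt^-1 * coupling ch d1 d2 = mass ka ch) /\
  (forall e1 e2, inVd dom bc e1 e2 ->
     coupling ka e1 e2 + stiffness d1 d2 e1 e2 = scheme_rhs dom bc rh e1 e2).
Proof.
set Y1 : nodal R J := fun i => X1 i + d1 i; set Y2 : nodal R J := fun i => X2 i + d2 i.
have locY k : loc Y1 k - loc X1 k = loc d1 k /\ loc Y2 k - loc X2 k = loc d2 k.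
  rewrite (loc_lincomb k (a := 1) (f := d1) (g := X1) (h := Y1))
    ?(loc_lincomb k (a := 1) (f := d2) (g := X2) (h := Y2)) ?polyC1 ?mul1r ?addrK //;
  by move=> i; rewrite mul1r addrC.
have first_eq ch : ipS J v (fun k => loc X1 k *
      ((loc Y1 k - loc X1 k) * (dt^-1 * nu1 X1 X2 k)%:P
     + (loc Y2 k - loc X2 k) * (dt^-1 * nu2 X1 X2 k)%:P) * loc ch k * (nrm X1 X2 k)%:P)
    = dt^-1 * coupling ch d1 d2.
  by apply: ipS_scale => k; have [-> ->] := locY k; rewrite !rmorphM /=; ring.
have second_eq e1 e2 : ipE J (fun k => loc X1 k *
      ((der Y1 k * der e1 k + der Y2 k * der e2 k) / nrm X1 X2 k)%:P)
    = stiffness X1 X2 e1 e2 + stiffness d1 d2 e1 e2.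
  rewrite -[stiffness X1 X2 e1 e2]mul1r; apply: (@ipS_lincomb _ _ Exact) => k.
  rewrite /stiffness_density (der_lincomb k (a := 1) (f := X1) (g := d1) (h := Y1))
    ?(der_lincomb k (a := 1) (f := X2) (g := d2) (h := Y2)) => [|i|i];
  by rewrite ?mul1r // !(rmorphD, rmorphM) /=; ring.
have rhsE e1 e2 : - boundary_term dom bc rh e1 e2
    - ipE J (fun k => loc e1 k * (nrm X1 X2 k)%:P) - stiffness X1 X2 e1 e2
    = scheme_rhs dom bc rh e1 e2 by [].
split=> -[eq1 eq2]; split=> [ch Hch | e1 e2 He].
- by rewrite -first_eq eq1.
- have := eq2 e1 e2 He; rewrite second_eq -/(coupling ka e1 e2) -rhsE => <-; ring.
- by rewrite first_eq eq1.
- have := eq2 e1 e2 He; rewrite -rhsE -/(coupling ka e1 e2) second_eq.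
  rewrite -/(boundary_term dom bc rh e1 e2); lra.
Qed.

Lemma scheme_iff_form dom bc rh dt d1 d2 ka :
  scheme v dom bc rh dt X1 X2 d1 d2 ka <->
  forall e1 e2 ch, inVd dom bc e1 e2 -> inW v dom bc ch ->
    scheme_form dt d1 d2 ka e1 e2 ch = scheme_rhs dom bc rh e1 e2.
Proof.
have O_Vd : inVd dom bc O O by do !split.
have O_W : inW v dom bc O by case: v; do !split.
rewrite schemeE; split => [[eq1 eq2] e1 e2 ch He Hch | eqs].
  by rewrite /scheme_form eq1 // eq2 // subrr add0r.
split => [ch Hch | e1 e2 He]; last by rewrite -(scheme_form_chi0 dt) eqs.
by apply/eqP; rewrite -subr_eq0 -(scheme_form_eta0 dt) eqs // scheme_rhs0.
Qed.

End SchemeForms.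

Lemma mul_double_sqr_add_sqr_ge0 (F : realFieldType) (x c d : F) (m : nat) :
  0 <= x -> 0 <= x * (2%:R * c ^+ 2 + d ^+ 2) / m%:R.
Proof.
move=> x_ge0; rewrite divr_ge0 ?ler0n // mulr_ge0 // addr_ge0 ?sqr_ge0 //.
by rewrite mulr_ge0 ?ler0n ?sqr_ge0.
Qed.

Lemma double_sqr_add_sqr_eq0 {F : realDomainType} {c d : F} :
  2%:R * c ^+ 2 + d ^+ 2 = 0 -> c = 0 /\ d = 0.
Proof.
move/eqP; rewrite paddr_eq0 ?(mulr_ge0 (ler0n _ 2) (sqr_ge0 c)) ?sqr_ge0 //.
by rewrite mulf_eq0 pnatr_eq0 !sqrf_eq0 => /andP[/eqP-> /eqP->].
Qed.

Section Coercivity.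
Variables (R : rcfType) (J : nat) (v : variant) (dom : domain) (bc : bool -> bctype)
  (X1 X2 : nodal R J).
Hypotheses (J_gt0 : (0 < J)%N) (HX : inVd0 dom bc X1 X2) (HA : assumA dom bc X1 X2).

Local Notation nrm k := (nrm X1 X2 k).

Lemma nodes_of_elements (P : nat -> Prop) :
  (forall k, (k < J)%N -> P k /\ P k.+1) -> forall j, (j <= J)%N -> P j.
Proof.
move=> PE j; rewrite leq_eqVlt => /orP[/eqP -> | /PE[] //].
by have [] := PE J.-1; rewrite ?prednK // ltn_predL.
Qed.

Lemma X1_node_cases {j} : (j <= J)%N ->
  (exists2 p, inbd dom bc B0 p & inord j = ep J p) \/ 0 < nd X1 j.
Proof.
move=> lejJ; have [p /andP[p0 /eqP jp] | noB0] :=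
  pickP (fun p => inbd dom bc B0 p && (inord j == ep J p)); first by left; exists p.
right; have ep_ord p : inord j = ep J p -> inbd dom bc B0 p -> False.
  by move=> jp p0; have := noB0 p; rewrite /= p0 jp eqxx.
move: lejJ; rewrite leq_eqVlt => /orP[/eqP jJ | ltjJ].
  have [_ hor1] := horner_loc X1 J.-1; rewrite prednK // in hor1.
  rewrite jJ -hor1; apply: HA.2; rewrite ?ler01 ?lexx ?prednK // => -[[_ [/eqP] ] | [_ [_ p0]]].
    by rewrite oner_eq0.
  by apply: (ep_ord true) => //; apply: val_inj; rewrite /= inordK jJ.
have [hor0 _] := horner_loc X1 j; rewrite -hor0; apply: HA.2; rewrite ?ler01 ?lexx //.
move=> -[[j0 [_ p0]] | [_ [/eqP]]]; last by rewrite eq_sym oner_eq0.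
by apply: (ep_ord false) => //; apply: val_inj; rewrite /= inordK j0.
Qed.

Lemma X1_node_ge0 {j} : (j <= J)%N -> 0 <= nd X1 j.
Proof.
move=> /X1_node_cases[[p p0 jp] | /ltW //].
by rewrite /nd jp; case: HX => _ [_ ->].
Qed.

Lemma X1_elem_pos {k} : (k < J)%N -> 0 < nd X1 k + nd X1 k.+1.
Proof.
move=> ltkJ; have half_gt0 : 0 < 2%:R^-1 :> R by rewrite invr_gt0 ltr0n.
have half_lt1 : 2%:R^-1 < 1 :> R by rewrite invf_lt1 ?ltr0n ?ltr1n.
have mid_pos : 0 < (loc X1 k).[2%:R^-1].
  apply: HA.2 => //; first by rewrite !ltW.
  by move=> -[[_ [/eqP]] | [_ [/eqP]]]; rewrite ?(gt_eqF half_gt0) ?(lt_eqF half_lt1).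
have -> : nd X1 k + nd X1 k.+1 = 2%:R * (loc X1 k).[2%:R^-1].
  by rewrite !(hornerD, hornerC, hornerZ, hornerX); field.
by rewrite mulr_gt0 ?ltr0n.
Qed.

Let Jinv_gt0 : 0 < (J%:R)^-1 :> R.
Proof. by rewrite invr_gt0 ltr0n. Qed.

Lemma lumped_mass_elemE ka k : ip_elem J Lumped (mass_density X1 X2 ka ka) k =
  (J%:R)^-1 / 2%:R * nrm k * (nd X1 k.+1 * nd ka k.+1 ^+ 2 + nd X1 k * nd ka k ^+ 2).
Proof.
have [X0 X1'] := horner_loc X1 k; have [ka0 ka1] := horner_loc ka k.
by rewrite /ip_elem /mass_density !(hornerM, hornerC) X0 X1' ka0 ka1; ring.
Qed.

Lemma exact_mass_elemE ka k : ip_elem J Exact (mass_density X1 X2 ka ka) k =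
  (J%:R)^-1 * nrm k * (nd X1 k * (2%:R * nd ka k ^+ 2 + (nd ka k + nd ka k.+1) ^+ 2) / 12%:R
    + nd X1 k.+1 * (2%:R * nd ka k ^+ 2 + (3%:R * nd ka k.+1 + nd ka k) ^+ 2) / 36%:R).
Proof. by rewrite /ip_elem /mass_density /loc int01_lin_sq_cst; ring. Qed.

Lemma mass_elem_ge0 ka k : (k < J)%N -> 0 <= ip_elem J v (mass_density X1 X2 ka ka) k.
Proof.
move=> ltkJ; have n_ge0 := ltW (HA.1 k ltkJ); have Jinv_ge0 := ltW Jinv_gt0.
have Xk := X1_node_ge0 (ltnW ltkJ); have Xk1 := X1_node_ge0 ltkJ.
case: v; rewrite ?lumped_mass_elemE ?exact_mass_elemE.
  apply: mulr_ge0 (mulr_ge0 (divr_ge0 Jinv_ge0 (ler0n _ 2)) n_ge0) _.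
  by rewrite addr_ge0 // mulr_ge0 ?sqr_ge0.
apply: mulr_ge0 (mulr_ge0 Jinv_ge0 n_ge0) _.
by rewrite addr_ge0 ?mul_double_sqr_add_sqr_ge0.
Qed.

Lemma lumped_mass_elem_eq0 {ka k} : (k < J)%N ->
  ip_elem J Lumped (mass_density X1 X2 ka ka) k = 0 ->
  nd X1 k * nd ka k ^+ 2 = 0 /\ nd X1 k.+1 * nd ka k.+1 ^+ 2 = 0.
Proof.
move=> ltkJ; have n_gt0 := HA.1 k ltkJ.
have Xk := X1_node_ge0 (ltnW ltkJ); have Xk1 := X1_node_ge0 ltkJ.
rewrite lumped_mass_elemE => /eqP; rewrite !mulf_eq0 (gt_eqF Jinv_gt0) (gt_eqF n_gt0) /=.
rewrite invr_eq0 pnatr_eq0 /= paddr_eq0 ?(mulr_ge0 Xk1 (sqr_ge0 _)) ?(mulr_ge0 Xk (sqr_ge0 _)) //.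
by move=> /andP[/eqP-> /eqP->].
Qed.

Lemma exact_mass_elem_eq0 {ka k} : (k < J)%N ->
  ip_elem J Exact (mass_density X1 X2 ka ka) k = 0 ->
  nd ka k = 0 /\ nd ka k.+1 = 0.
Proof.
move=> ltkJ; have n_gt0 := HA.1 k ltkJ.
have Xk := X1_node_ge0 (ltnW ltkJ); have Xk1 := X1_node_ge0 ltkJ.
rewrite exact_mass_elemE => /eqP; rewrite !mulf_eq0 (gt_eqF Jinv_gt0) (gt_eqF n_gt0) /=.
rewrite paddr_eq0 ?mul_double_sqr_add_sqr_ge0 // => /andP[].
rewrite !mulf_eq0 !invr_eq0 !pnatr_eq0 !orbF.
move=> /orP[/eqP X0 | /eqP/double_sqr_add_sqr_eq0[c0 s0]]; last by split=> //; lra.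
move=> /orP[/eqP X0' | /eqP/double_sqr_add_sqr_eq0[c0 s0]]; last by split=> //; lra.
by have := X1_elem_pos ltkJ; rewrite X0 X0' addr0 ltxx.
Qed.

Lemma mass_diag_ge0 ka : 0 <= mass v X1 X2 ka ka.
Proof. by apply: ipS_ge0 => k; apply: mass_elem_ge0. Qed.

Lemma mass_diag_eq0 {ka} : inW v dom bc ka -> mass v X1 X2 ka ka = 0 -> forall i, ka i = 0.
Proof.
move=> kaW /(ipS_eq0_elem (mass_elem_ge0 ka)) elem0; apply: nodal_eq0.
case: v kaW elem0 => [[_ ka_B0] | _] elem0; apply: nodes_of_elements => k ltkJ; last first.
  exact: exact_mass_elem_eq0 (elem0 _ ltkJ).
have [w0 w1] := lumped_mass_elem_eq0 ltkJ (elem0 _ ltkJ).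
have node_eq0 j : (j <= J)%N -> nd X1 j * nd ka j ^+ 2 = 0 -> nd ka j = 0.
  case/X1_node_cases => [[p p0 jp] _ | Xj_gt0]; first by rewrite /nd jp ka_B0.
  by move/eqP; rewrite mulf_eq0 (gt_eqF Xj_gt0) sqrf_eq0 => /eqP.
by split; apply: node_eq0; rewrite // ltnW.
Qed.

Lemma stiffness_elemE d1 d2 k : ip_elem J Exact (stiffness_density X1 X2 d1 d2 d1 d2) k =
  (J%:R)^-1 * ((der d1 k ^+ 2 + der d2 k ^+ 2) / nrm k * ((nd X1 k + nd X1 k.+1) / 2%:R)).
Proof.
rewrite /ip_elem /stiffness_density /loc int01_lin_cst -!expr2.
by congr (_ * (_ * _)); field.
Qed.

Lemma stiffness_elem_ge0 d1 d2 k : (k < J)%N ->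
  0 <= ip_elem J Exact (stiffness_density X1 X2 d1 d2 d1 d2) k.
Proof.
move=> ltkJ; rewrite stiffness_elemE mulr_ge0 ?(ltW Jinv_gt0) // mulr_ge0 //.
  by rewrite divr_ge0 ?addr_ge0 ?sqr_ge0 ?(ltW (HA.1 k ltkJ)).
by rewrite divr_ge0 ?ler0n ?(ltW (X1_elem_pos ltkJ)).
Qed.

Lemma stiffness_diag_ge0 d1 d2 : 0 <= stiffness X1 X2 d1 d2 d1 d2.
Proof. by apply: ipS_ge0 => k; apply: stiffness_elem_ge0. Qed.

Lemma stiffness_diag_eq0 {d1 d2} : stiffness X1 X2 d1 d2 d1 d2 = 0 ->
  forall k, (k < J)%N -> der d1 k = 0 /\ der d2 k = 0.
Proof.
move=> /(ipS_eq0_elem (stiffness_elem_ge0 d1 d2)) elem0 k ltkJ.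
move/eqP: (elem0 k ltkJ); rewrite stiffness_elemE !mulf_eq0 (gt_eqF Jinv_gt0).
rewrite invr_eq0 (gt_eqF (HA.1 k ltkJ)) (gt_eqF (X1_elem_pos ltkJ)) invr_eq0 pnatr_eq0 /= !orbF.
by rewrite paddr_eq0 ?sqr_ge0 // !sqrf_eq0 => /andP[/eqP-> /eqP->].
Qed.

Lemma homogeneous_scheme_trivial dt d1 d2 ka :
  assumC v dom bc X1 X2 -> 0 < dt -> inVd dom bc d1 d2 -> inW v dom bc ka ->
  (forall e1 e2 ch, inVd dom bc e1 e2 -> inW v dom bc ch ->
     scheme_form v X1 X2 dt d1 d2 ka e1 e2 ch = 0) ->
  forall i, d1 i = 0 /\ d2 i = 0 /\ ka i = 0.
Proof.
move=> spanC dt_gt0 dV kaW homog; pose O : nodal R J := fun=> 0.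
have O_V : inVd dom bc O O by do !split.
have O_W : inW v dom bc O by case: v; do !split.
have test_ka := homog O O ka O_V kaW; rewrite scheme_form_eta0 in test_ka.
have test_d := homog d1 d2 O dV O_W; rewrite scheme_form_chi0 in test_d.
have M_ge0 := mass_diag_ge0 ka; have S_ge0 := stiffness_diag_ge0 d1 d2.
have energy : dt * mass v X1 X2 ka ka + stiffness X1 X2 d1 d2 d1 d2 = 0.
  have -> : mass v X1 X2 ka ka = dt^-1 * coupling v X1 X2 ka d1 d2.
    by apply/esym/eqP; rewrite -subr_eq0 test_ka.
  by rewrite mulrA divff ?gt_eqF // mul1r.
have mass0 : mass v X1 X2 ka ka = 0 by nra.
have ka0 := mass_diag_eq0 kaW mass0.
have /stiffness_diag_eq0 der0 : stiffness X1 X2 d1 d2 d1 d2 = 0.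
  by rewrite mass0 mulr0 add0r in energy.
have d1E := der_eq0_cst (fun (k : nat) ltkJ => (der0 k ltkJ).1).
have d2E := der_eq0_cst (fun (k : nat) ltkJ => (der0 k ltkJ).2).
have [c1_0 c2_0] : d1 ord0 = 0 /\ d2 ord0 = 0.
  apply: (assumC_orthogonal_eq0 spanC) => ch chW.
  have := homog O O ch O_V chW; rewrite scheme_form_eta0 (coupling_cst v X1 X2 d1E d2E).
  rewrite [mass _ _ _ _ _]ipS_eq0 => [|k]; last first.
    by rewrite /mass_density (loc_cst k ka0) polyC0; ring.
  by rewrite subr0 => /eqP; rewrite mulf_eq0 invr_eq0 (gt_eqF dt_gt0) => /eqP.
by move=> i; rewrite d1E d2E ka0 c1_0 c2_0.
Qed.

End Coercivity.

Section Admissibility.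
Variables (R : rcfType) (J : nat) (v : variant) (dom : domain) (bc : bool -> bctype).
Implicit Types (f : nodal R J).

Definition periodic_gap f : R := if dom is Periodic then f ord0 - f ord_max else 0.

Definition masked (b : bool) (x : R) : R := if b then x else 0.

Definition fixes_fst p := [|| inbd dom bc B0 p, inbd dom bc B1 p | inbd dom bc BD p].
Definition fixes_snd p := inbd dom bc B2 p || inbd dom bc BD p.
Definition fixes_curvature p := if v is Lumped then inbd dom bc B0 p else false.

(* The admissible triples, V^h_\partial x W_sharp, form the common kernel of these nine
   linear functionals. *)
Definition constraint_list (f1 f2 f3 : nodal R J) : seq R :=
  [:: periodic_gap f1; periodic_gap f2; periodic_gap f3;
      masked (fixes_fst false) (f1 (ep J false)); masked (fixes_fst true) (f1 (ep J true));
      masked (fixes_snd false) (f2 (ep J false)); masked (fixes_snd true) (f2 (ep J true));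
      masked (fixes_curvature false) (f3 (ep J false));
      masked (fixes_curvature true) (f3 (ep J true))].

Lemma inV_gap f : inV dom f <-> periodic_gap f = 0.
Proof.
rewrite /inV /periodic_gap; case: dom; split=> // [->|/eqP] //; first by rewrite subrr.
by rewrite subr_eq0 => /eqP.
Qed.

Lemma inW_masked f : inW v dom bc f <->
  periodic_gap f = 0 /\ forall p, masked (fixes_curvature p) (f (ep J p)) = 0.
Proof.
rewrite /inW /masked /fixes_curvature; case: v; rewrite /inWd0 inV_gap; last by split=> [|[]].
split=> -[gap0 fp] //; split=> // p; first by case: ifP => // /fp.
by move=> p0; have := fp p; rewrite p0.
Qed.

Lemma inVd_masked (f1 f2 : nodal R J) : inVd dom bc f1 f2 <->
  [/\ periodic_gap f1 = 0, periodic_gap f2 = 0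
    & forall p, masked (fixes_fst p) (f1 (ep J p)) = 0 /\ masked (fixes_snd p) (f2 (ep J p)) = 0].
Proof.
rewrite /inVd /inVd0 !inV_gap; split=> [[[g1 [g2 f0]] [f1B [f2B fD]]] | [g1 g2 fp]].
  split=> // p; rewrite /masked /fixes_fst /fixes_snd; split; case: ifP => //.
    by case/orP=> [/f0 | /orP[/f1B | /fD[]]].
  by case/orP=> [/f2B | /fD[]].
have fix1 p : fixes_fst p -> f1 (ep J p) = 0 by move=> pB; have [] := fp p; rewrite /masked pB.
have fix2 p : fixes_snd p -> f2 (ep J p) = 0 by move=> pB; have [] := fp p; rewrite /masked pB.
rewrite /fixes_fst /fixes_snd in fix1 fix2.
split; [split=> //; split=> // | split; [|split]] => p pB.
- by apply: fix1; rewrite pB.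
- by apply: fix1; rewrite pB orbT.
- by apply: fix2; rewrite pB.
- by rewrite fix1 ?fix2 // pB !orbT.
Qed.

Lemma admissible_constraints (f1 f2 f3 : nodal R J) :
  inVd dom bc f1 f2 /\ inW v dom bc f3 <->
  forall i : 'I_9, nth 0 (constraint_list f1 f2 f3) i = 0.
Proof.
rewrite inVd_masked inW_masked; split=> [[[g1 g2 fp] [g3 f3p]] | l0].
  have [[m1 m2] [m1' m2']] := (fp false, fp true).
  by case=> -[|[|[|[|[|[|[|[|[|i]]]]]]]]] //=; rewrite ?f3p.
have e i (lti9 : (i < 9)%N) := l0 (Ordinal lti9).
split; [split; [exact: (e 0%N) | exact: (e 1%N) | case] | split; [exact: (e 2%N) | case]].
- by split; [exact: (e 4%N) | exact: (e 6%N)].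
- by split; [exact: (e 3%N) | exact: (e 5%N)].
- exact: (e 8%N).
- exact: (e 7%N).
Qed.

Lemma constraint_list_lincomb a (f1 f2 f3 g1 g2 g3 h1 h2 h3 : nodal R J) :
  (forall i, h1 i = a * f1 i + g1 i) -> (forall i, h2 i = a * f2 i + g2 i) ->
  (forall i, h3 i = a * f3 i + g3 i) ->
  forall i, nth 0 (constraint_list h1 h2 h3) i =
    a * nth 0 (constraint_list f1 f2 f3) i + nth 0 (constraint_list g1 g2 g3) i.
Proof.
move=> h1E h2E h3E.
have gapE f g h : (forall i, h i = a * f i + g i) ->
    periodic_gap h = a * periodic_gap f + periodic_gap g.
  by move=> hE; rewrite /periodic_gap; case: dom; rewrite ?hE; ring.
have maskE b (x y : R) : masked b (a * x + y) = a * masked b x + masked b y.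
  by rewrite /masked; case: b; ring.
case=> [|[|[|[|[|[|[|[|[|i]]]]]]]]] /=; rewrite ?(gapE _ _ _ h1E) ?(gapE _ _ _ h2E)
  ?(gapE _ _ _ h3E) ?h1E ?h2E ?h3E ?maskE ?nth_nil //; ring.
Qed.

End Admissibility.

Section RowEncoding.
Variables (R : rcfType) (J : nat).
Local Notation N := (J.+1 + (J.+1 + J.+1))%N.
Implicit Types (u w : 'rV[R]_N).

Definition triple_row (f1 f2 f3 : nodal R J) : 'rV[R]_N :=
  row_mx (\row_i f1 i) (row_mx (\row_i f2 i) (\row_i f3 i)).

Definition row_fst u : nodal R J := fun i => lsubmx u 0 i.
Definition row_snd u : nodal R J := fun i => lsubmx (rsubmx u) 0 i.
Definition row_thd u : nodal R J := fun i => rsubmx (rsubmx u) 0 i.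

Lemma row_fst_lincomb a u w i : row_fst (a *: u + w) i = a * row_fst u i + row_fst w i.
Proof. by rewrite /row_fst linearD linearZ /= !mxE. Qed.

Lemma row_snd_lincomb a u w i : row_snd (a *: u + w) i = a * row_snd u i + row_snd w i.
Proof. by rewrite /row_snd !linearD !linearZ /= !mxE. Qed.

Lemma row_thd_lincomb a u w i : row_thd (a *: u + w) i = a * row_thd u i + row_thd w i.
Proof. by rewrite /row_thd !linearD !linearZ /= !mxE. Qed.

Lemma row_fst_triple f1 f2 f3 : row_fst (triple_row f1 f2 f3) = f1.
Proof. by apply: functional_extensionality => i; rewrite /row_fst row_mxKl mxE. Qed.

Lemma row_snd_triple f1 f2 f3 : row_snd (triple_row f1 f2 f3) = f2.
Proof. by apply: functional_extensionality => i; rewrite /row_snd row_mxKr row_mxKl mxE. Qed.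

Lemma row_thd_triple f1 f2 f3 : row_thd (triple_row f1 f2 f3) = f3.
Proof. by apply: functional_extensionality => i; rewrite /row_thd !row_mxKr mxE. Qed.

Lemma triple_row_comp u : triple_row (row_fst u) (row_snd u) (row_thd u) = u.
Proof.
rewrite /triple_row -[RHS]hsubmxK -[rsubmx u]hsubmxK.
by congr row_mx; [|congr row_mx]; apply/rowP => i; rewrite mxE.
Qed.

Lemma triple_row0 : triple_row (fun=> 0) (fun=> 0) (fun=> 0) = 0.
Proof.
rewrite /triple_row (_ : \row_i 0 = 0 :> 'rV[R]_J.+1) ?row_mx0 //.
by apply/rowP => i; rewrite !mxE.
Qed.

End RowEncoding.

Section DiscreteProblem.
Variables (R : rcfType) (J : nat) (v : variant) (dom : domain) (bc : bool -> bctype)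
  (rh : bool -> R) (X1 X2 : nodal R J) (dt : R).
Local Notation N := (J.+1 + (J.+1 + J.+1))%N.
Implicit Types (u w : 'rV[R]_N).

Definition residual_form u w : R := scheme_form v X1 X2 dt
  (row_fst u) (row_snd u) (row_thd u) (row_fst w) (row_snd w) (row_thd w).

Definition load_form w : R := scheme_rhs X1 X2 dom bc rh (row_fst w) (row_snd w).

Definition constraint_map u : 'rV[R]_9 :=
  \row_(i < 9) nth 0 (constraint_list v dom bc (row_fst u) (row_snd u) (row_thd u)) i.

Lemma constraint_map_eq0 u : constraint_map u = 0 <->
  inVd dom bc (row_fst u) (row_snd u) /\ inW v dom bc (row_thd u).
Proof.
rewrite admissible_constraints; split=> [/rowP u0 i | u0]; last by apply/rowP => i; rewrite !mxE.
by have := u0 i; rewrite !mxE.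
Qed.

Lemma constraint_map_triple d1 d2 ka : inVd dom bc d1 d2 -> inW v dom bc ka ->
  constraint_map (triple_row d1 d2 ka) = 0.
Proof.
by move=> dV kaW; apply/constraint_map_eq0; rewrite row_fst_triple row_snd_triple row_thd_triple.
Qed.

Lemma constraint_map_lin a u u' :
  constraint_map (a *: u + u') = a *: constraint_map u + constraint_map u'.
Proof.
apply/rowP => i; rewrite !mxE; apply: constraint_list_lincomb.
- exact: row_fst_lincomb.
- exact: row_snd_lincomb.
- exact: row_thd_lincomb.
Qed.

Lemma residual_form_linl a u u' w :
  residual_form (a *: u + u') w = a * residual_form u w + residual_form u' w.
Proof.
have h1E := row_fst_lincomb a u u'; have h2E := row_snd_lincomb a u u'.
have h3E := row_thd_lincomb a u u'.
rewrite /residual_form /scheme_form (coupling_linr _ _ _ h1E h2E) (mass_linl _ _ _ h3E).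
rewrite (coupling_linl _ _ _ h3E) (stiffness_linl _ _ h1E h2E); ring.
Qed.

Lemma residual_form_linr a u w w' :
  residual_form u (a *: w + w') = a * residual_form u w + residual_form u w'.
Proof.
have h1E := row_fst_lincomb a w w'; have h2E := row_snd_lincomb a w w'.
have h3E := row_thd_lincomb a w w'.
rewrite /residual_form /scheme_form (coupling_linl _ _ _ h3E) (mass_linr _ _ _ h3E).
rewrite (coupling_linr _ _ _ h1E h2E) (stiffness_linr _ _ h1E h2E); ring.
Qed.

Lemma load_form_lin a w w' : load_form (a *: w + w') = a * load_form w + load_form w'.
Proof. exact: scheme_rhs_lin _ _ (row_fst_lincomb a w w') (row_snd_lincomb a w w') _ _ _. Qed.

Lemma scheme_row d1 d2 ka : scheme v dom bc rh dt X1 X2 d1 d2 ka <->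
  forall w, constraint_map w = 0 -> residual_form (triple_row d1 d2 ka) w = load_form w.
Proof.
rewrite scheme_iff_form /residual_form row_fst_triple row_snd_triple row_thd_triple.
split=> [sch w /constraint_map_eq0[] | sch e1 e2 ch eV chW]; first exact: sch.
have := sch (triple_row e1 e2 ch) (constraint_map_triple eV chW).
by rewrite /load_form !(row_fst_triple, row_snd_triple, row_thd_triple).
Qed.

Hypotheses (J_gt0 : (0 < J)%N) (HX : inVd0 dom bc X1 X2) (HA : assumA dom bc X1 X2)
  (HC : assumC v dom bc X1 X2) (dt_gt0 : 0 < dt).

Lemma residual_form_nondegenerate u : constraint_map u = 0 ->
  (forall w, constraint_map w = 0 -> residual_form u w = 0) -> u = 0.
Proof.
move=> /constraint_map_eq0[uV uW] u0.
have homog e1 e2 ch : inVd dom bc e1 e2 -> inW v dom bc ch ->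
    scheme_form v X1 X2 dt (row_fst u) (row_snd u) (row_thd u) e1 e2 ch = 0.
  move=> eV chW; have := u0 _ (constraint_map_triple eV chW).
  by rewrite /residual_form !(row_fst_triple, row_snd_triple, row_thd_triple).
have u0i := homogeneous_scheme_trivial J_gt0 HX HA HC dt_gt0 uV uW homog.
rewrite -(triple_row_comp u) -triple_row0.
by congr triple_row; apply: functional_extensionality => i; have [? [? ?]] := u0i i.
Qed.

Lemma scheme_exists : exists dX1 dX2 kap : nodal R J,
  inVd dom bc dX1 dX2 /\ inW v dom bc kap /\ scheme v dom bc rh dt X1 X2 dX1 dX2 kap.
Proof.
have [u /constraint_map_eq0[uV uW] uB] := solution_exists residual_form_linl residual_form_linr
  load_form_lin constraint_map_lin residual_form_nondegenerate.
exists (row_fst u), (row_snd u), (row_thd u); split=> //; split=> //.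
by apply/scheme_row; rewrite triple_row_comp.
Qed.

Lemma scheme_unique dX1 dX2 kap dY1 dY2 lam :
  inVd dom bc dX1 dX2 -> inW v dom bc kap -> scheme v dom bc rh dt X1 X2 dX1 dX2 kap ->
  inVd dom bc dY1 dY2 -> inW v dom bc lam -> scheme v dom bc rh dt X1 X2 dY1 dY2 lam ->
  dX1 = dY1 /\ dX2 = dY2 /\ kap = lam.
Proof.
move=> dXV kapW /scheme_row sX dYV lamW /scheme_row sY.
have XY := solution_unique residual_form_linl constraint_map_lin residual_form_nondegenerate
  (constraint_map_triple dXV kapW) sX (constraint_map_triple dYV lamW) sY.
split; first by have := congr1 (@row_fst R J) XY; rewrite !row_fst_triple.
split; first by have := congr1 (@row_snd R J) XY; rewrite !row_snd_triple.
by have := congr1 (@row_thd R J) XY; rewrite !row_thd_triple.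
Qed.

End DiscreteProblem.

Theorem lemma4p3 (R : rcfType) (J : nat) (HJ : (3 <= J)%N)
  (dom : domain) (bc : bool -> bctype) (rh : bool -> R)
  (Hrh : forall p, `|rh p| <= 1) (v : variant)
  (X1 X2 : nodal R J)
  (HX : inVd0 dom bc X1 X2) (HA : assumA dom bc X1 X2)
  (HC : assumC v dom bc X1 X2) (dt : R) (Hdt : 0 < dt) :
  (exists dX1 dX2 kap : nodal R J,
     inVd dom bc dX1 dX2 /\ inW v dom bc kap /\
     scheme v dom bc rh dt X1 X2 dX1 dX2 kap) /\
  (forall dX1 dX2 kap dY1 dY2 lam : nodal R J,
     inVd dom bc dX1 dX2 -> inW v dom bc kap ->
     scheme v dom bc rh dt X1 X2 dX1 dX2 kap ->
     inVd dom bc dY1 dY2 -> inW v dom bc lam ->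
     scheme v dom bc rh dt X1 X2 dY1 dY2 lam ->
     dX1 = dY1 /\ dX2 = dY2 /\ kap = lam).
Proof.
have J_gt0 : (0 < J)%N by apply: leq_trans HJ.
split; first exact: scheme_exists J_gt0 HX HA HC Hdt.
exact: scheme_unique J_gt0 HX HA HC Hdt.
Qed.
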